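(* Let $\beta>0$, $\mu_x,\mu_y\in\mathbb{R}$, and let $X\sim\mathrm{MaxGumbel}(\mu_x,\beta)$ and $Y\sim\mathrm{MinGumbel}(\mu_y,\beta)$ be independent. Then $$\mathbb{E}\big[\max(Y-X,0)\big]=2\beta\,K_0\!\left(2e^{-\frac{\mu_y-\mu_x}{2\beta}}\right),$$ where $K_0$ is the modified Bessel function of the second kind of order $0$.
   Context: $\mathrm{MaxGumbel}(\mu,\beta)$ denotes the distribution on $\mathbb{R}$ with density $\frac1\beta\exp\!\big(-\tfrac{x-\mu}{\beta}-e^{-(x-\mu)/\beta}\big)$; $\mathrm{MinGumbel}(\mu,\beta)$ denotes the distribution with density $\frac1\beta\exp\!\big(\tfrac{x-\mu}{\beta}-e^{(x-\mu)/\beta}\big)$ (the law of $-Z$ for $Z\sim\mathrm{MaxGumbel}(-\mu,\beta)$). $K_0(z)=\int_0^\infty e^{-z\cosh t}\,dt$ for $z>0$. *)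

From HB Require Import structures.
From mathcomp Require Import all_boot all_order all_algebra.
From mathcomp Require Import all_classical all_reals all_analysis.
Set Implicit Arguments. Unset Strict Implicit. Unset Printing Implicit Defensive.
Import Order.TTheory GRing.Theory Num.Theory.
Import numFieldNormedType.Exports.
Local Open Scope classical_set_scope.
Local Open Scope ring_scope.

Definition maxGumbel_pdf (R : realType) (mu beta : R) (x : R) : R :=
  beta^-1 * expR (- ((x - mu) / beta) - expR (- ((x - mu) / beta))).

Definition minGumbel_pdf (R : realType) (mu beta : R) (x : R) : R :=
  beta^-1 * expR ((x - mu) / beta - expR ((x - mu) / beta)).

Definition has_density d (T : measurableType d) (R : realType)
  (P : probability T R) (X : {RV P >-> R}) (f : R -> R) : Prop :=
  forall A : set R, measurable A ->
    distribution P X A = (\int[lebesgue_measure]_(x in A) (f x)%:E)%E.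

Definition independent_RV d (T : measurableType d) (R : realType)
  (P : probability T R) (X Y : {RV P >-> R}) : Prop :=
  forall A B : set R, measurable A -> measurable B ->
    P (X @^-1` A `&` Y @^-1` B) = (P (X @^-1` A) * P (Y @^-1` B))%E.

(* K_0(z) = int_0^oo exp(-z cosh t) dt, cosh t = (e^t + e^-t)/2 *)
Definition besselK0 (R : realType) (z : R) : \bar R :=
  (\int[lebesgue_measure]_(t in `[0%R, +oo[)
     (expR (- z * ((expR t + expR (- t)) / 2)))%:E)%E.

From mathcomp Require Import all_boot all_order all_algebra.
From mathcomp Require Import all_classical all_reals all_analysis.
From mathcomp Require Import measurable_realfun ring.
Import Order.TTheory GRing.Theory Num.Theory.
Import numFieldNormedType.Exports.
Local Open Scope classical_set_scope.
Local Open Scope ring_scope.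

(* Write G_{m,b}(x) = exp(-exp(-(x - m)/b)) for the
   MaxGumbel distribution function.  The proof has three independent parts:
   1. (layer cake) for any two real random variables, by Tonelli,
        E[max(Y - X, 0)] = int_R P(X < y < Y) dy;
   2. (distribution functions) G_{m,b} is a primitive of the MaxGumbel density
      tending to 1 at +oo, so P(X < y) = G_{mx,b}(y); as MinGumbel(my, b) is the
      reflection of MaxGumbel(-my, b), P(Y > y) = G_{-my,b}(-y);
   3. (Bessel integral) independence makes the integrand of 1. the product
      G_{mx,b}(y) G_{-my,b}(-y), which after y = b s + (mx + my)/2 becomes
      exp(-z cosh s) with z = 2 exp(-(my - mx)/(2b)); this is even in s, so
      the integral is b * 2 * int_0^oo exp(-z cosh s) ds = 2 b K_0(z). *)

Section real_calculus.
Context {R : realType}.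

Lemma continuous_is_derive {f df : R -> R} :
  (forall x : R, is_derive x 1 f (df x)) -> continuous f.
Proof.
move=> f'df x; apply/differentiable_continuous/derivable1_diffP.
have dfx := f'df x; exact: ex_derive.
Qed.

Lemma is_derive_affine (k c x : R) : is_derive x 1 (fun t : R => k * t + c) k.
Proof. by apply: is_derive_eq; rewrite addr0 -[RHS]mulr1. Qed.

Lemma continuous_affine (k c : R) : continuous (fun t : R => k * t + c).
Proof.
by apply: (continuous_is_derive (df := fun=> k)) => x; exact: is_derive_affine.
Qed.

Lemma integral_itvcy_primitive (f F : R -> R) (a l : R) :
  (forall x, 0 <= f x) -> continuous f ->
  (forall x : R, is_derive x 1 F (f x)) -> F x @[x --> +oo] --> l ->
  (\int[lebesgue_measure]_(x in `[a, +oo[) (f x)%:E = (l - F a)%:E)%E.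
Proof.
move=> f_ge0 fC Ff Fl; have FC := continuous_is_derive Ff.
rewrite EFinB; apply: ge0_continuous_FTC2y => //.
- exact: continuous_subspaceT.
- exact: cvg_at_right_filter (FC a).
- by move=> x _; rewrite derive1E derive_val.
Qed.

Lemma integral_affine_change (G : R -> R) (b c : R) : 0 < b ->
  continuous G -> (forall x, 0 <= G x) ->
  (\int[lebesgue_measure]_x (G x)%:E =
   b%:E * \int[lebesgue_measure]_s (G (b * s + c))%:E)%E.
Proof.
move=> b_gt0 GC G_ge0; pose F s := b * s + c.
have F'E : (F^`())%classic = cst b.
  by apply/funext => s; have dF := is_derive_affine b c s; rewrite derive1E derive_val.
have F_incr : {homo F : x y / x < y} by move=> x y xy; rewrite ltrD2r ltr_pM2l.
have FNy : F x @[x --> -oo] --> -oo.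
  apply/cvgrNyPler => A _; near=> x.
  rewrite /F -lerBrDr [b * x]mulrC -ler_pdivlMr; last exact: b_gt0.
  near: x; apply: nbhs_ninfty_le; exact: num_real.
have Fy : F x @[x --> +oo] --> +oo.
  apply/cvgryPger => A _; near=> x.
  rewrite /F -lerBlDr [b * x]mulrC -ler_pdivrMr; last exact: b_gt0.
  near: x; apply: nbhs_pinfty_ge; exact: num_real.
rewrite (increasing_ge0_integration_by_substitutionT F_incr) // ?F'E //; last 3 first.
- by move=> x; exact: cvg_cst.
- exact: is_cvg_cst.
- exact: is_cvg_cst.
transitivity (\int[lebesgue_measure]_s (b%:E * (G (F s))%:E))%E.
  by apply: eq_integral => s _; rewrite -EFinM mulrC.
have GFC : continuous (G \o F).
  by move=> x; apply: continuous_comp; [exact: continuous_affine | exact: GC].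
rewrite ge0_integralZl_EFin //; last 3 first.
- by move=> x _; rewrite lee_fin.
- by apply/measurable_EFinP; exact: continuous_measurable_fun.
- exact: ltW.
Unshelve. all: end_near. Qed.

Lemma integral_indic_itvoo (a c : R) :
  (\int[lebesgue_measure]_y (\1_`]a, c[ y)%:E = (Num.max (c - a) 0)%:E)%E.
Proof.
rewrite integral_indic //= setIT lebesgue_measure_itv /= lte_fin.
by case: ltP => ac; [rewrite -EFinB max_l // subr_ge0 ltW | rewrite max_r // subr_le0].
Qed.

Lemma ereal_one_sub_one_sub (e : R) : (1 - (1 - e)%:E)%E = e%:E.
Proof. by rewrite -[1%E]/(1%:E) -EFinB opprB addrC subrK. Qed.
End real_calculus.

Definition gumbel_cdf {R : realType} (m b x : R) : R :=
  expR (- expR (- ((x - m) / b))).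

Section gumbel.
Context {R : realType}.
Variable b : R.

Lemma gumbel_arg_affine (m x : R) : - ((x - m) / b) = - b^-1 * x + m / b.
Proof. by rewrite mulrBl opprB addrC mulNr mulrC. Qed.

Lemma is_derive_gumbel_cdf (m x : R) :
  is_derive x 1 (gumbel_cdf m b) (maxGumbel_pdf m b x).
Proof.
pose g t := - b^-1 * t + m / b.
have -> : gumbel_cdf m b = expR \o (- (expR \o g)).
  by apply/funext => t; rewrite /gumbel_cdf /= gumbel_arg_affine.
have dexpg := is_derive1_comp (is_derive_expR (g x))
  (is_derive_affine (- b^-1) (m / b) x).
apply: is_derive_eq (is_derive1_comp (is_derive_expR _) (is_deriveN dexpg)) _.
change ((- (expR \o g)) x) with (- expR (g x)).
by rewrite /maxGumbel_pdf gumbel_arg_affine -/(g x) (expRD (g x)); ring.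
Qed.

Lemma continuous_gumbel_cdf (m : R) : continuous (gumbel_cdf m b).
Proof. exact: continuous_is_derive (is_derive_gumbel_cdf m). Qed.

Lemma continuous_maxGumbel_pdf (m : R) : continuous (maxGumbel_pdf m b).
Proof.
pose g t := - b^-1 * t + m / b.
have gC : continuous g := continuous_affine (- b^-1) (m / b).
have -> : maxGumbel_pdf m b = fun x => b^-1 * expR (g x - expR (g x)).
  by apply/funext => x; rewrite /maxGumbel_pdf gumbel_arg_affine.
move=> x; apply: (continuousM (s := cst b^-1)
  (t := fun x => expR (g x - expR (g x)))); first exact: cvg_cst.
apply: (continuous_comp (f := fun x => g x - expR (g x)));
  last exact: continuous_expR.
apply: continuousB; first exact: gC.
by apply: (continuous_comp (f := g)); [exact: gC | exact: continuous_expR].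
Qed.

Lemma minGumbel_pdf_reflect (m x : R) :
  minGumbel_pdf m b x = maxGumbel_pdf (- m) b (- x).
Proof. by rewrite /minGumbel_pdf /maxGumbel_pdf opprK -mulNr opprD opprK addrC. Qed.

Hypothesis b_gt0 : 0 < b.

Lemma maxGumbel_pdf_ge0 (m x : R) : 0 <= maxGumbel_pdf m b x.
Proof. by apply: mulr_ge0; [rewrite invr_ge0 ltW | exact: expR_ge0]. Qed.

Lemma gumbel_cdf_cvgy (m : R) : gumbel_cdf m b x @[x --> +oo] --> (1 : R).
Proof.
have argy : (fun x => (x - m) / b) @ +oo --> +oo.
  apply/cvgryPger => A _; near=> x.
  rewrite ler_pdivlMr // lerBrDr.
  near: x; apply: nbhs_pinfty_ge; exact: num_real.
have := cvgN (cvg_comp _ _ argy (@cvgr_expR R)); rewrite oppr0 => expNy.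
by rewrite -expR0; exact: cvg_comp _ _ (expNy _) (@continuous_expR R 0).
Unshelve. all: end_near. Qed.

Lemma maxGumbel_tail (m y : R) :
  (\int[lebesgue_measure]_(x in `[y, +oo[) (maxGumbel_pdf m b x)%:E =
   (1 - gumbel_cdf m b y)%:E)%E.
Proof.
apply: integral_itvcy_primitive.
- exact: maxGumbel_pdf_ge0.
- exact: continuous_maxGumbel_pdf.
- exact: is_derive_gumbel_cdf.
- exact: gumbel_cdf_cvgy.
Qed.

Lemma minGumbel_head (m y : R) :
  (\int[lebesgue_measure]_(x in `]-oo, y]) (minGumbel_pdf m b x)%:E =
   (1 - gumbel_cdf (- m) b (- y))%:E)%E.
Proof.
have minC : continuous (minGumbel_pdf m b).
  have -> : minGumbel_pdf m b = maxGumbel_pdf (- m) b \o -%R.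
    by apply/funext => x; rewrite /= minGumbel_pdf_reflect.
  move=> x; apply: continuous_comp; first exact: opp_continuous.
  exact: continuous_maxGumbel_pdf.
have := @ge0_integration_by_substitutionNy R (minGumbel_pdf m b) (- y).
rewrite opprK => ->; last 2 first.
- exact: continuous_subspaceT.
- by move=> x _; rewrite minGumbel_pdf_reflect; exact: maxGumbel_pdf_ge0.
rewrite -maxGumbel_tail; apply: eq_integral => x _.
by rewrite /= minGumbel_pdf_reflect opprK.
Qed.
End gumbel.

Section gumbel_variables.
Context {d : measure_display} {T : measurableType d} {R : realType}.
Context {P : probability T R}.

Lemma has_density_preimage_setC {X : {RV P >-> R}} {f : R -> R} {A : set R} :
  has_density X f -> measurable A ->
  P (X @^-1` ~` A) = (1 - \int[lebesgue_measure]_(x in A) (f x)%:E)%E.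
Proof.
move=> Xf mA; rewrite preimage_setC probability_setC; last exact: measurable_funPTI.
by have := Xf A mA; rewrite /distribution /pushforward => ->.
Qed.

Lemma maxGumbel_cdf {X : {RV P >-> R}} {m b : R} (y : R) : 0 < b ->
  has_density X (maxGumbel_pdf m b) ->
  P (X @^-1` `]-oo, y[) = (gumbel_cdf m b y)%:E.
Proof.
move=> b_gt0 Xf; rewrite -setCitvr (has_density_preimage_setC Xf);
  last exact: measurable_itv.
by rewrite maxGumbel_tail // ereal_one_sub_one_sub.
Qed.

Lemma minGumbel_survival {Y : {RV P >-> R}} {m b : R} (y : R) : 0 < b ->
  has_density Y (minGumbel_pdf m b) ->
  P (Y @^-1` `]y, +oo[) = (gumbel_cdf (- m) b (- y))%:E.
Proof.
move=> b_gt0 Yf; rewrite -setCitvl (has_density_preimage_setC Yf);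
  last exact: measurable_itv.
by rewrite minGumbel_head // ereal_one_sub_one_sub.
Qed.
End gumbel_variables.

Section layer_cake.
Context d (T : measurableType d) (R : realType) (P : probability T R).
Variables X Y : {RV P >-> R}.

(* The region of T * R strictly between the graphs of X and Y; its fibres
   over T are the intervals ]X w, Y w[, its sections over R are the events
   X < y < Y. *)
Let between : set (T * R) := [set p | X p.1 < p.2 < Y p.1].

Let measurable_between : measurable between.
Proof.
have mb : measurable_fun setT (fun p : T * R => (X p.1 < p.2) && (p.2 < Y p.1)).
  by apply: measurable_and; apply: measurable_fun_ltr => //;
    apply: measurableT_comp => //; exact: measurable_fst.
by rewrite -[between]setTI; exact: mb measurableT [set true] I.
Qed.

Let indic_between_fiber (w : T) (y : R) :
  \1_between (w, y) = \1_`]X w, Y w[ y :> R.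
Proof. by rewrite !indicE set_itvoo. Qed.

Let indic_between_section (w : T) (y : R) :
  \1_between (w, y) = \1_(X @^-1` `]-oo, y[ `&` Y @^-1` `]y, +oo[) w :> R.
Proof.
rewrite !indicE; congr ((nat_of_bool _)%:R).
apply/idP/idP => /set_mem mem; apply/mem_set; move: mem.
all: by rewrite /= !in_itv /= andbT => /andP.
Qed.

(* Layer cake: integrating the indicator of the region between X and Y in
   both orders (Tonelli) gives E[max(Y - X, 0)] = int_R P(X < y < Y) dy. *)
Lemma expectation_max_sub0 :
  ('E_P[(fun w => Num.max (Y w - X w) 0)%R] =
   \int[lebesgue_measure]_y P (X @^-1` `]-oo, y[ `&` Y @^-1` `]y, +oo[))%E.
Proof.
rewrite unlock.
transitivity (\int[P]_w \int[lebesgue_measure]_y (\1_between (w, y))%:E)%E.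
  apply: eq_integral => w _; rewrite -integral_indic_itvoo.
  by apply: eq_integral => y _; rewrite indic_between_fiber.
rewrite (fubini_tonelli (m1 := P) (m2 := lebesgue_measure)
  (fun p => (\1_between p)%:E)) //; last first.
  by apply/measurable_EFinP; exact: measurable_indic.
apply: eq_integral => y _.
under eq_integral do rewrite indic_between_section.
rewrite integral_indic ?setIT //.
by apply: measurableI; exact: measurable_funPTI.
Qed.
End layer_cake.

Definition besselK0_integrand {R : realType} (z s : R) : R :=
  expR (- z * ((expR s + expR (- s)) / 2)).

Section bessel.
Context {R : realType}.

Lemma continuous_besselK0_integrand (z : R) : continuous (besselK0_integrand z).
Proof.
move=> x; apply: (continuous_comp (f := fun s => - z * ((expR s + expR (- s)) / 2)));
  last exact: continuous_expR.
apply: (continuousM (s := cst (- z)) (t := fun s => (expR s + expR (- s)) / 2)).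
  exact: cvg_cst.
apply: (continuousM (s := fun s => expR s + expR (- s)) (t := cst 2^-1));
  last exact: cvg_cst.
apply: (continuousD (f := expR) (g := fun s => expR (- s)));
  first exact: continuous_expR.
by apply: (continuous_comp (f := -%R)); [exact: opp_continuous | exact: continuous_expR].
Qed.

(* The integrand is even, so its integral over the line is 2 K_0(z). *)
Lemma integral_besselK0_integrand (z : R) :
  (\int[lebesgue_measure]_s (besselK0_integrand z s)%:E = 2 * besselK0 z)%E.
Proof.
rewrite ge0_symfun_integralT -?set_itvcy //.
- by move=> s; exact: expR_ge0.
- exact: continuous_besselK0_integrand.
- by move=> s; rewrite /besselK0_integrand /= opprK addrC.
Qed.

(* Centring at the midpoint (mx + my)/2 and scaling by b turns the product of
   the two Gumbel tails into the K_0 integrand. *)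
Lemma gumbel_product_cosh (mx my b s : R) : b != 0 ->
  gumbel_cdf mx b (b * s + (mx + my) / 2) *
  gumbel_cdf (- my) b (- (b * s + (mx + my) / 2)) =
  besselK0_integrand (2 * expR (- ((my - mx) / (2 * b)))) s.
Proof.
move=> b_neq0; rewrite /gumbel_cdf /besselK0_integrand -expRD; congr expR.
set c := (my - mx) / (2 * b).
have -> : - ((b * s + (mx + my) / 2 - mx) / b) = - s + - c by rewrite /c; field.
have -> : - ((- (b * s + (mx + my) / 2) - - my) / b) = s + - c by rewrite /c; field.
by rewrite !expRD; field.
Qed.

Lemma integral_gumbel_product (mx my b : R) : 0 < b ->
  (\int[lebesgue_measure]_y (gumbel_cdf mx b y * gumbel_cdf (- my) b (- y))%:E =
   (2 * b)%:E * besselK0 (2 * expR (- ((my - mx) / (2 * b)))))%E.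
Proof.
move=> b_gt0.
have GC : continuous (fun y => gumbel_cdf mx b y * gumbel_cdf (- my) b (- y)).
  move=> y; apply: continuousM; first exact: continuous_gumbel_cdf.
  apply: (continuous_comp (f := -%R)); first exact: opp_continuous.
  exact: continuous_gumbel_cdf.
rewrite (integral_affine_change _ _ ((mx + my) / 2) b_gt0 GC); last first.
  by move=> y; apply: mulr_ge0; exact: expR_ge0.
under eq_integral do rewrite gumbel_product_cosh ?gt_eqF //.
by rewrite integral_besselK0_integrand muleA -EFinM [b * 2]mulrC.
Qed.
End bessel.

Theorem mainTheorem2 (d : measure_display) (T : measurableType d)
  (R : realType) (P : probability T R) (beta mux muy : R)
  (X Y : {RV P >-> R}) :
  0 < beta ->
  has_density X (maxGumbel_pdf mux beta) ->
  has_density Y (minGumbel_pdf muy beta) ->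
  independent_RV X Y ->
  ('E_P[(fun w => Num.max (Y w - X w) 0)%R] =
     (2 * beta)%:E * besselK0 (2 * expR (- ((muy - mux) / (2 * beta)))))%E.
Proof.
move=> beta_gt0 Xf Yf XY.
rewrite expectation_max_sub0 -integral_gumbel_product //.
apply: eq_integral => y _.
rewrite XY; [|exact: measurable_itv..].
by rewrite (maxGumbel_cdf _ beta_gt0 Xf) (minGumbel_survival _ beta_gt0 Yf) -EFinM.
Qed.
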